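(* Under the hypotheses and notation of the linearised solver without regularisation (with $L\ge L_\zeta/2$, $u^n$ the solution of the nonlinear discrete equation and $(u^{n,i})_{i\ge0}$ the iterates), let $e^{n,i}:=u^n-u^{n,i}$. Then for every $i\ge1$, $$2\|\Pi_{\mathcal D}e^{n,i}\|_{*,\mathcal D}^2+\delta t\,L\,\|\Pi_{\mathcal D}e^{n,i}\|^2\le \delta t\,L\,\|\Pi_{\mathcal D}e^{n,i-1}\|^2,$$ and consequently $2\sum_{i=1}^\infty\|\Pi_{\mathcal D}e^{n,i}\|_{*,\mathcal D}^2\le\delta t\,L\,\|\Pi_{\mathcal D}e^{n,0}\|^2$.
   Context: Setting: $\Theta\subset\mathbb{R}^d$ open bounded; gradient discretisation with piecewise constant reconstruction $(X_{\mathcal D},\Pi_{\mathcal D},\nabla_{\mathcal D})$: $X_{\mathcal D}$ finite-dimensional with basis indexed by a finite set $B$, $\Pi_{\mathcal D}v=\sum_{j\in B}v_j\mathbf 1_{\Theta_j}$ for disjoint measurable $\Theta_j\subset\Theta$, $\nabla_{\mathcal D}:X_{\mathcal D}\to L^2(\Theta)^d$ linear with $\|\nabla_{\mathcal D}\cdot\|$ a norm. For $g$ with $g(0)=0$, $g(v):=(g(v_j))_j$. $\zeta$ non-decreasing Lipschitz, $\zeta(0)=0$, $0\le\zeta'\le L_\zeta$ a.e.; $\delta t>0$; $r\in L^2(\Theta)$ fixed. $u^n\in X_{\mathcal D}$ satisfies $\langle\Pi_{\mathcal D}u^n,\Pi_{\mathcal D}\varphi\rangle+\delta t\langle\nabla_{\mathcal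 D}\zeta(u^n),\nabla_{\mathcal D}\varphi\rangle=\langle r,\Pi_{\mathcal D}\varphi\rangle$ for all $\varphi\in X_{\mathcal D}$; $u^{n,0}\in X_{\mathcal D}$ arbitrary and for $i\ge1$, $\langle\Pi_{\mathcal D}u^{n,i},\Pi_{\mathcal D}\varphi\rangle+\delta t L\langle\nabla_{\mathcal D}u^{n,i},\nabla_{\mathcal D}\varphi\rangle=\delta t\langle L\nabla_{\mathcal D}u^{n,i-1}-\nabla_{\mathcal D}\zeta(u^{n,i-1}),\nabla_{\mathcal D}\varphi\rangle+\langle r,\Pi_{\mathcal D}\varphi\rangle$ for all $\varphi$. $\|\cdot\|$ is the $L^2(\Theta)$ norm and $\|v\|_{*,\mathcal D}:=\sup\{\int_\Theta v\,\Pi_{\mathcal D}w: w\in X_{\mathcal D},\|\nabla_{\mathcal D}w\|=1\}$. *)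

From mathcomp Require Import all_boot all_order all_algebra.
From mathcomp Require Import all_classical all_reals all_analysis.
Set Implicit Arguments. Unset Strict Implicit. Unset Printing Implicit Defensive.
Import Order.TTheory GRing.Theory Num.Theory.
Import numFieldNormedType.Exports.
Local Open Scope classical_set_scope.
Local Open Scope ring_scope.

Section GDDefs.
Context {R : realType} {dsp : measure_display} {T : measurableType dsp}
  (mu : {measure set T -> \bar R}) (Theta : set T).

Definition L2inner (f g : T -> R) : R :=
  Rintegral mu Theta (fun x => f x * g x).
Definition L2norm (f : T -> R) : R := Num.sqrt (L2inner f f).

Definition L2vinner (d : nat) (F G : T -> 'rV[R]_d) : R :=
  Rintegral mu Theta (fun x => \sum_(k < d) F x 0 k * G x 0 k).
Definition L2vnorm (d : nat) (F : T -> 'rV[R]_d) : R :=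
  Num.sqrt (L2vinner F F).

Definition isL2 (f : T -> R) : Prop :=
  measurable_fun Theta f /\
  (\int[mu]_(x in Theta) ((f x) ^+ 2)%:E < +oo)%E.
Definition isL2v (d : nat) (F : T -> 'rV[R]_d) : Prop :=
  forall k : 'I_d, isL2 (fun x => F x 0 k).

Definition PiD (B : finType) (Om : B -> set T) (v : B -> R) : T -> R :=
  fun x => \sum_(j : B) v j * \1_(Om j) x.

Definition compv (B : finType) (g : R -> R) (v : B -> R) : B -> R :=
  fun j => g (v j).

Definition dualnorm (B : finType) (d : nat) (Om : B -> set T)
  (grad : (B -> R) -> T -> 'rV[R]_d) (v : T -> R) : R :=
  sup [set y : R | exists w : B -> R,
         L2vnorm (grad w) = 1 /\ y = L2inner v (PiD Om w)].

End GDDefs.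

(* Subtracting the linearised step from the nonlinear equation, the errors
   e = e^{n,i} and e' = e^{n,i-1} satisfy, with the mass form m and the
   stiffness form a of the gradient discretisation,
     m(e, phi) + dt L a(e, phi) = dt L a(e', phi) - dt a(zeta(u^n) - zeta(u^{n,i-1}), phi).
   Since a is an inner product on X_D, m(e, .) has a Riesz representative w,
   and by Cauchy-Schwarz ||Pi_D e||_*^2 <= a(w, w) = m(e, w).  Testing with
   phi = w turns the right-hand side into dt (L m(e, e') - m(e, zeta defect)),
   which is at most dt L/2 (m(e, e) + m(e', e')): on each cell the defect
   L (s - t) - (zeta s - zeta t) has modulus at most L |s - t| because zeta is
   nondecreasing and (2 L)-Lipschitz.  The series bound follows by
   telescoping the one-step inequality. *)

From mathcomp Require Import all_boot all_order all_algebra.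
From mathcomp Require Import all_classical all_reals all_analysis.
From mathcomp Require Import ring lra measurable_realfun.
Set Implicit Arguments. Unset Strict Implicit. Unset Printing Implicit Defensive.
Import Order.TTheory GRing.Theory Num.Theory.
Import numFieldNormedType.Exports.
Local Open Scope classical_set_scope.
Local Open Scope ring_scope.

Section MonotoneLipschitz.
Context {R : realFieldType} (zeta : R -> R) (Lz L : R).
Hypothesis zeta_mono : {homo zeta : x y / x <= y}.
Hypothesis zeta_lip : forall x y, `|zeta x - zeta y| <= Lz * `|x - y|.
Hypothesis LzL : Lz / 2 <= L.

(* Monotonicity puts zeta u - zeta v between 0 and 2 L (u - v). *)
Lemma monotone_lipschitz_defect_norm (u v : R) :
  `|L * (u - v) - (zeta u - zeta v)| <= L * `|u - v|.
Proof.
have LzL2 : Lz <= L * 2 by rewrite -ler_pdivrMr.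
have lip := zeta_lip u v; rewrite ler_norml.
have [vu|uv] := leP v u.
  have mono : 0 <= zeta u - zeta v by rewrite subr_ge0 zeta_mono.
  have uv_abs : `|u - v| = u - v by rewrite ger0_norm // subr_ge0.
  rewrite uv_abs ger0_norm // in lip *.
  apply/andP; split; nra.
have mono : zeta u - zeta v <= 0 by rewrite subr_le0 zeta_mono ?ltW.
have uv_abs : `|u - v| = - (u - v) by rewrite ler0_norm // subr_le0 ltW.
rewrite uv_abs ler0_norm // in lip *.
apply/andP; split; nra.
Qed.

Lemma monotone_lipschitz_defect_le (a u v : R) : 0 <= Lz ->
  a * (L * (u - v) - (zeta u - zeta v)) <= L / 2 * (a ^+ 2 + (u - v) ^+ 2).
Proof.
move=> Lz_ge0; have L_ge0 : 0 <= L by apply: le_trans LzL; rewrite divr_ge0.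
have amgm : 2 * (`|a| * `|u - v|) <= a ^+ 2 + (u - v) ^+ 2.
  rewrite -[a ^+ 2]real_normK ?num_real // -[(u - v) ^+ 2]real_normK ?num_real //.
  have := sqr_ge0 (`|a| - `|u - v|); lra.
have := ler_norm (a * (L * (u - v) - (zeta u - zeta v))); rewrite normrM.
have := ler_wpM2l (normr_ge0 a) (monotone_lipschitz_defect_norm u v).
nra.
Qed.

End MonotoneLipschitz.

Section SquareIntegrable.
Context {R : realType} {dsp : measure_display} {T : measurableType dsp}
  (mu : {measure set T -> \bar R}) (Theta : set T).
Hypothesis mTheta : measurable Theta.
Hypothesis finTheta : (mu Theta < +oo)%E.

Lemma integrable_EFinD (f g : T -> R) : mu.-integrable Theta (EFin \o f) ->
  mu.-integrable Theta (EFin \o g) ->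
  mu.-integrable Theta (EFin \o (fun x => f x + g x)).
Proof.
by move=> intf intg; apply: eq_integrable (integrableD mTheta intf intg).
Qed.

Lemma integrable_EFinB (f g : T -> R) : mu.-integrable Theta (EFin \o f) ->
  mu.-integrable Theta (EFin \o g) ->
  mu.-integrable Theta (EFin \o (fun x => f x - g x)).
Proof.
by move=> intf intg; apply: eq_integrable (integrableB mTheta intf intg).
Qed.

Lemma integrable_EFinZl (a : R) (f : T -> R) : mu.-integrable Theta (EFin \o f) ->
  mu.-integrable Theta (EFin \o (fun x => a * f x)).
Proof.
by move=> intf; apply: eq_integrable (integrableZl mTheta a intf).
Qed.

Lemma isL2_integrable_sqr (f : T -> R) : isL2 mu Theta f ->
  mu.-integrable Theta (EFin \o (fun x => f x ^+ 2)).
Proof.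
move=> [mf fin]; apply/integrableP; split.
  by apply/measurable_EFinP; exact: measurable_funX.
by under eq_integral => x _ do rewrite /= ger0_norm ?sqr_ge0//.
Qed.

Lemma isL2_integrableM (f g : T -> R) : isL2 mu Theta f -> isL2 mu Theta g ->
  mu.-integrable Theta (EFin \o (fun x => f x * g x)).
Proof.
move=> L2f L2g.
have int_sum := integrable_EFinD (isL2_integrable_sqr L2f) (isL2_integrable_sqr L2g).
apply: le_integrable int_sum => //.
  by apply/measurable_EFinP; apply: measurable_funM; [case: L2f | case: L2g].
move=> x _ /=; rewrite lee_fin [X in _ <= X]ger0_norm ?addr_ge0 ?sqr_ge0 //.
rewrite ler_norml; apply/andP; split; nra.
Qed.

Lemma integrable_cst (k : R) : mu.-integrable Theta (EFin \o cst k).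
Proof.
apply/integrableP; split; first exact/measurable_EFinP.
rewrite (_ : (\int[mu]_(x in Theta) _ = `|k|%:E * mu Theta)%E).
  by rewrite lte_mul_pinfty.
by rewrite -integral_cst //; apply: eq_integral.
Qed.

Lemma bounded_isL2 (f : T -> R) (M : R) : measurable_fun Theta f ->
  (forall x, `|f x| <= M) -> isL2 mu Theta f.
Proof.
move=> mf f_le; split => //.
have int_sqr : mu.-integrable Theta (EFin \o (fun x => f x ^+ 2)).
  apply: le_integrable (integrable_cst (M ^+ 2)) => //.
    by apply/measurable_EFinP; exact: measurable_funX.
  move=> x _ /=; rewrite lee_fin !ger0_norm ?sqr_ge0 //.
  by have := f_le x; rewrite ler_norml => /andP[? ?]; nra.
move/integrableP: int_sqr => [_].
by under eq_integral => x _ do rewrite /= ger0_norm ?sqr_ge0//.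
Qed.

End SquareIntegrable.

Section SymmetricBilinearForm.
Context {R : realFieldType} {B : finType}.

Definition linear_form (F : (B -> R) -> R) :=
  forall (a : R) (v w : B -> R), F (fun j => a * v j + w j) = a * F v + F w.

Definition delta (k : B) : B -> R := fun j => (j == k)%:R.

Lemma linear_form0 (F : (B -> R) -> R) : linear_form F -> F (fun _ => 0) = 0.
Proof.
move=> linF; have := linF 1 (fun _ => 0) (fun _ => 0).
have -> : (fun _ : B => 1 * 0 + 0) = (fun _ => 0 : R).
  by apply: boolp.funext => j; rewrite mulr0 addr0.
by rewrite mul1r => /(congr1 (fun x => x - F (fun _ => 0))); rewrite addrK subrr.
Qed.

Lemma linear_form_big (F : (B -> R) -> R) (I : Type) (s : seq I)
    (c : I -> R) (f : I -> B -> R) : linear_form F ->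
  F (fun j => \sum_(k <- s) c k * f k j) = \sum_(k <- s) c k * F (f k).
Proof.
move=> linF; elim: s => [|k s IH].
  under boolp.eq_fun do rewrite big_nil.
  by rewrite big_nil linear_form0.
under boolp.eq_fun do rewrite big_cons.
by rewrite big_cons linF IH.
Qed.

Lemma linear_form_delta (F : (B -> R) -> R) (psi : B -> R) : linear_form F ->
  F psi = \sum_k psi k * F (delta k).
Proof.
move=> linF; rewrite -linear_form_big //; congr F; apply: boolp.funext => j.
rewrite (bigD1 j) //= /delta eqxx mulr1 big1 ?addr0 // => k kj.
by rewrite eq_sym (negbTE kj) mulr0.
Qed.

Variable b : (B -> R) -> (B -> R) -> R.
Hypothesis b_sym : forall v w, b v w = b w v.
Hypothesis b_linr : forall u, linear_form (b u).

Lemma bilin_oppr (u w : B -> R) : b u (fun j => - w j) = - b u w.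
Proof.
have -> : (fun j => - w j) = (fun j => -1 * w j + (fun _ => 0) j).
  by apply: boolp.funext => j; rewrite mulN1r addr0.
by rewrite b_linr linear_form0 // addr0 mulN1r.
Qed.

Lemma bilin_combl (c : R) (v w phi : B -> R) :
  b (fun j => c * v j - w j) phi = c * b v phi - b w phi.
Proof. by rewrite b_sym b_linr bilin_oppr !(b_sym phi). Qed.

Lemma bilin_subl (v w phi : B -> R) :
  b (fun j => v j - w j) phi = b v phi - b w phi.
Proof.
rewrite -[b v phi]mul1r -bilin_combl; congr b.
by apply: boolp.funext => j; rewrite mul1r.
Qed.

Hypothesis b_ge0 : forall v, 0 <= b v v.

Lemma bilin_cauchy_unit (w w' : B -> R) : b w' w' = 1 -> b w w' ^+ 2 <= b w w.
Proof.
move=> w'_unit; set t := b w w'.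
pose z := fun j => - t * w' j + w j.
have zw' : b z w' = 0 by rewrite b_sym b_linr w'_unit (b_sym w') mulr1 addNr.
have zw : b z w = b w w - t ^+ 2 by rewrite b_sym b_linr -/t; ring.
have := b_ge0 z; rewrite {2}/z b_linr zw' zw; lra.
Qed.

Hypothesis b_definite : forall v, b v v = 0 -> v = (fun _ => 0).

Definition gram : 'M[R]_#|B| :=
  \matrix_(p, q) b (delta (enum_val p)) (delta (enum_val q)).

Lemma mul_gram (v : 'rV[R]_#|B|) (k : B) :
  (v *m gram) 0 (enum_rank k) = b (fun j => v 0 (enum_rank j)) (delta k).
Proof.
rewrite mxE b_sym (linear_form_delta _ (b_linr _)).
rewrite (reindex enum_rank) /=; last first.
  by apply: onW_bij; exists enum_val; [exact: enum_rankK | exact: enum_valK].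
by apply: eq_bigr => j _; rewrite mxE !enum_rankK b_sym.
Qed.

Lemma gram_unit : gram \in unitmx.
Proof.
rewrite -row_free_unit; apply: inj_row_free => v v_gram.
set f := fun j => v 0 (enum_rank j).
have /b_definite f0 : b f f = 0.
  rewrite (linear_form_delta _ (b_linr f)) big1 // => k _.
  by rewrite -mul_gram v_gram mxE mulr0.
apply/rowP => p; rewrite mxE.
by have := congr1 (fun g => g (enum_val p)) f0; rewrite /f /= enum_valK.
Qed.

Lemma bilin_riesz (F : (B -> R) -> R) : linear_form F ->
  exists w, forall psi, b w psi = F psi.
Proof.
move=> linF; pose w := (\row_q F (delta (enum_val q))) *m invmx gram.
exists (fun j => w 0 (enum_rank j)) => psi.
rewrite (linear_form_delta psi (b_linr _)) (linear_form_delta psi linF).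
apply: eq_bigr => k _; congr (_ * _).
by rewrite -mul_gram /w mulmxKV ?gram_unit // mxE enum_rankK.
Qed.

End SymmetricBilinearForm.

Section GradientDiscretisation.
Context {R : realType} {dsp : measure_display} {T : measurableType dsp}
  (mu : {measure set T -> \bar R}) (Theta : set T) (d : nat)
  (B : finType) (Om : B -> set T) (grad : (B -> R) -> T -> 'rV[R]_d).
Hypothesis mTheta : measurable Theta.
Hypothesis finTheta : (mu Theta < +oo)%E.
Hypothesis mOm : forall j, measurable (Om j).
Hypothesis Om_disj : forall j k, j != k -> Om j `&` Om k = set0.
Hypothesis grad_L2 : forall v, isL2v mu Theta (grad v).
Hypothesis grad_lin : forall (a : R) (v w : B -> R),
  grad (fun j => a * v j + w j) = (fun x => a *: grad v x + grad w x).
Hypothesis grad_definite :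
  forall v, L2vnorm mu Theta (grad v) = 0 -> v = (fun _ => 0).

Lemma PiD_measurable (v : B -> R) : measurable_fun Theta (PiD Om v).
Proof.
apply: (@measurable_sum _ _ R Theta B (index_enum B) (fun j x => v j * \1_(Om j) x)) => j.
by apply: measurable_funM => //; exact: measurable_indic.
Qed.

Lemma PiD_isL2 (v : B -> R) : isL2 mu Theta (PiD Om v).
Proof.
apply: (bounded_isL2 mTheta finTheta (PiD_measurable v) (M := \sum_j `|v j|)) => x.
apply: le_trans (ler_norm_sum _ _ _) _; apply: ler_sum => j _.
by rewrite normrM indicE; case: (x \in Om j); rewrite ?normr1 ?normr0 ?mulr1 ?mulr0.
Qed.

Lemma PiD_linear (a : R) (v w : B -> R) x :
  PiD Om (fun j => a * v j + w j) x = a * PiD Om v x + PiD Om w x.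
Proof.
rewrite /PiD mulr_sumr -big_split /=; apply: eq_bigr => j _.
by rewrite mulrDl mulrA.
Qed.

Lemma PiD_cell (v : B -> R) j x : Om j x -> PiD Om v x = v j.
Proof.
move=> Omjx; rewrite /PiD (bigD1 j) //= indicE mem_set // mulr1.
rewrite big1 ?addr0 // => k kj; rewrite indicE.
case: (boolP (x \in Om k)) => [/set_mem Omkx|]; last by rewrite mulr0.
have : (Om j `&` Om k) x by split.
by rewrite Om_disj // eq_sym.
Qed.

Lemma PiD_outside (v : B -> R) x : (forall j, ~ Om j x) -> PiD Om v x = 0.
Proof.
move=> notin; rewrite /PiD big1 // => j _; rewrite indicE.
by case: (boolP (x \in Om j)) => [/set_mem /notin|]; rewrite ?mulr0.
Qed.

Definition mass (v w : B -> R) := L2inner mu Theta (PiD Om v) (PiD Om w).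
Definition stiff (v w : B -> R) := L2vinner mu Theta (grad v) (grad w).

Lemma mass_sym (v w : B -> R) : mass v w = mass w v.
Proof. by rewrite /mass /L2inner; under eq_Rintegral do rewrite mulrC. Qed.

Lemma stiff_sym (v w : B -> R) : stiff v w = stiff w v.
Proof.
rewrite /stiff /L2vinner.
by under eq_Rintegral do under eq_bigr do rewrite mulrC.
Qed.

Lemma mass_ge0 (v : B -> R) : 0 <= mass v v.
Proof. by apply: Rintegral_ge0 => x _; rewrite -expr2 sqr_ge0. Qed.

Lemma stiff_ge0 (v : B -> R) : 0 <= stiff v v.
Proof.
by apply: Rintegral_ge0 => x _; apply: sumr_ge0 => k _; rewrite -expr2 sqr_ge0.
Qed.

Lemma mass_linr (u : B -> R) : linear_form (mass u).
Proof.
move=> a v w; rewrite /mass /L2inner.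
under eq_Rintegral do rewrite PiD_linear mulrDr mulrCA.
have int_uv := isL2_integrableM mTheta (PiD_isL2 u) (PiD_isL2 v).
have int_uw := isL2_integrableM mTheta (PiD_isL2 u) (PiD_isL2 w).
rewrite RintegralD ?RintegralZl //; exact: integrable_EFinZl.
Qed.

Lemma isL2v_integrable_dot (F G : T -> 'rV[R]_d) :
  isL2v mu Theta F -> isL2v mu Theta G ->
  mu.-integrable Theta (EFin \o (fun x => \sum_(k < d) F x 0 k * G x 0 k)).
Proof.
move=> L2F L2G.
have := @integrable_sum _ _ _ mu _ mTheta _ (index_enum 'I_d) xpredT
  (fun k x => (F x 0 k * G x 0 k)%:E)
  (fun k _ => isL2_integrableM mTheta (L2F k) (L2G k)).
by apply: eq_integrable => // x _ /=; rewrite sumEFin.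
Qed.

Lemma stiff_linr (u : B -> R) : linear_form (stiff u).
Proof.
move=> a v w; rewrite /stiff /L2vinner grad_lin.
have -> : (fun x => \sum_(k < d) grad u x 0 k * (a *: grad v x + grad w x) 0 k) =
    (fun x => a * (\sum_(k < d) grad u x 0 k * grad v x 0 k) +
              \sum_(k < d) grad u x 0 k * grad w x 0 k).
  apply: boolp.funext => x; rewrite mulr_sumr -big_split /=.
  by apply: eq_bigr => k _; rewrite !mxE mulrDr mulrCA.
have int_uv := isL2v_integrable_dot (grad_L2 u) (grad_L2 v).
have int_uw := isL2v_integrable_dot (grad_L2 u) (grad_L2 w).
rewrite RintegralD ?RintegralZl //; exact: integrable_EFinZl.
Qed.

Lemma stiff_definite (v : B -> R) : stiff v v = 0 -> v = (fun _ => 0).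
Proof. by move=> v0; apply: grad_definite; rewrite /L2vnorm -/(stiff v v) v0 sqrtr0. Qed.

Lemma dualnorm_sqr_le (e w : B -> R) : (forall psi, stiff w psi = mass e psi) ->
  dualnorm mu Theta Om grad (PiD Om e) ^+ 2 <= stiff w w.
Proof.
move=> w_riesz; rewrite /dualnorm; set S := [set y : R | _].
have S_ub : ubound S (Num.sqrt (stiff w w)).
  move=> _ [w' [w'_unit ->]].
  have w'w' : stiff w' w' = 1.
    by rewrite -(sqr_sqrtr (stiff_ge0 w')) -/(L2vnorm _ _ _) w'_unit expr1n.
  have := bilin_cauchy_unit stiff_sym stiff_linr stiff_ge0 w w'w'.
  rewrite w_riesz -/(mass e w') => cs.
  rewrite (le_trans (ler_norm _)) // -(sqrtr_sqr (mass e w')) ler_sqrt //.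
  exact: stiff_ge0.
have [[y Sy]|S0] := pselect (S !=set0); last first.
  have -> : S = set0 by apply/seteqP; split => y // Sy; apply: S0; exists y.
  by rewrite sup0 expr0n stiff_ge0.
have S_opp : S (- y).
  case: Sy => w' [w'_unit ->]; exists (fun j => - w' j); split.
    rewrite -w'_unit /L2vnorm -!/(stiff _ _).
    by rewrite (bilin_oppr stiff_linr) stiff_sym (bilin_oppr stiff_linr) opprK.
  by rewrite -[RHS]/(mass e _) (bilin_oppr mass_linr).
have S_bounded : has_ubound S by exists (Num.sqrt (stiff w w)).
have := ge_sup (ex_intro _ y Sy) S_ub.
have := ub_le_sup S_bounded Sy; have := ub_le_sup S_bounded S_opp => ? ? ?.
rewrite -(sqr_sqrtr (stiff_ge0 w)) lerXn2r ?nnegrE ?sqrtr_ge0 //; lra.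
Qed.

Lemma mass_le_pointwise (a b c : B -> R) (L : R) :
  (forall x, PiD Om a x * (L * PiD Om b x - PiD Om c x) <=
             L / 2 * (PiD Om a x ^+ 2 + PiD Om b x ^+ 2)) ->
  L * mass a b - mass a c <= L / 2 * (mass a a + mass b b).
Proof.
move=> pointwise; rewrite /mass /L2inner.
have int_ab := isL2_integrableM mTheta (PiD_isL2 a) (PiD_isL2 b).
have int_ac := isL2_integrableM mTheta (PiD_isL2 a) (PiD_isL2 c).
have int_aa := isL2_integrableM mTheta (PiD_isL2 a) (PiD_isL2 a).
have int_bb := isL2_integrableM mTheta (PiD_isL2 b) (PiD_isL2 b).
have int_sqr := integrable_EFinD mTheta int_aa int_bb.
have int_Lab := integrable_EFinZl mTheta L int_ab.
rewrite -RintegralZl // -RintegralB // -RintegralD // -RintegralZl //.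
apply: le_Rintegral => //.
- exact (integrable_EFinB mTheta int_Lab int_ac).
- exact (integrable_EFinZl mTheta _ int_sqr).
- by move=> x _; have := pointwise x; rewrite !expr2; congr (_ <= _); ring.
Qed.

Lemma mass_defect_le (zeta : R -> R) (Lz L : R) (a u v : B -> R) :
  {homo zeta : x y / x <= y} -> 0 <= Lz ->
  (forall x y, `|zeta x - zeta y| <= Lz * `|x - y|) -> Lz / 2 <= L ->
  L * mass a (fun j => u j - v j) - mass a (fun j => compv zeta u j - compv zeta v j)
  <= L / 2 * (mass a a + mass (fun j => u j - v j) (fun j => u j - v j)).
Proof.
move=> zeta_mono Lz_ge0 zeta_lip LzL; apply: mass_le_pointwise => x.
have [[j Omjx]|notin] := pselect (exists j, Om j x).
  rewrite !(PiD_cell _ Omjx) /compv.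
  exact: monotone_lipschitz_defect_le zeta_mono zeta_lip LzL _ _ _ Lz_ge0.
rewrite !PiD_outside => [|j Omjx|j Omjx|j Omjx]; try by apply: notin; exists j.
lra.
Qed.

Lemma grad0 : grad (fun _ => 0) = (fun _ => 0).
Proof.
have := grad_lin 1 (fun _ => 0) (fun _ => 0).
under [in X in X = _ -> _]boolp.eq_fun do rewrite mulr0 addr0.
move=> grad00; apply: boolp.funext => x.
have := congr1 (fun g => g x - grad (fun _ => 0) x) grad00.
by rewrite /= scale1r addrK subrr => <-.
Qed.

Lemma grad_combB (c : R) (v w : B -> R) :
  grad (fun j => c * v j - w j) = (fun x => c *: grad v x - grad w x).
Proof.
have -> : (fun j => c * v j - w j) = (fun j => c * v j + (-1 * w j + 0)).
  by apply: boolp.funext => j; rewrite mulN1r addr0.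
rewrite grad_lin; apply: boolp.funext => x.
by rewrite (grad_lin (-1) w (fun _ => 0)) grad0 scaleN1r addr0.
Qed.

Section LinearisedIteration.
Variables (zeta : R -> R) (Lz L dt : R) (r : T -> R).
Hypothesis zeta_mono : {homo zeta : x y / x <= y}.
Hypothesis Lz_ge0 : 0 <= Lz.
Hypothesis zeta_lip : forall x y, `|zeta x - zeta y| <= Lz * `|x - y|.
Hypothesis dt_gt0 : 0 < dt.
Hypothesis LzL : Lz / 2 <= L.

Definition solves_nonlinear (u : B -> R) := forall phi,
  mass u phi + dt * stiff (compv zeta u) phi = L2inner mu Theta r (PiD Om phi).

Definition linearised_step (u_prev u_next : B -> R) := forall phi,
  mass u_next phi + dt * L * stiff u_next phi
  = dt * L2vinner mu Theta
           (fun x => L *: grad u_prev x - grad (compv zeta u_prev) x) (grad phi)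
    + L2inner mu Theta r (PiD Om phi).

Variables (u u_prev u_next : B -> R).
Hypothesis u_sol : solves_nonlinear u.
Hypothesis step : linearised_step u_prev u_next.

Let e_prev := fun j => u j - u_prev j.
Let e_next := fun j => u j - u_next j.
Let zeta_defect := fun j => compv zeta u j - compv zeta u_prev j.

Lemma linearised_error_eq (phi : B -> R) :
  mass e_next phi + dt * L * stiff e_next phi
  = dt * L * stiff e_prev phi - dt * stiff zeta_defect phi.
Proof.
have := step phi; rewrite -grad_combB -/(stiff _ phi).
rewrite (bilin_combl stiff_sym stiff_linr) => step_phi.
rewrite /e_next /e_prev /zeta_defect !(bilin_subl mass_sym mass_linr).
rewrite !(bilin_subl stiff_sym stiff_linr).
have := u_sol phi; lra.
Qed.

Lemma linearised_error_contraction :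
  2 * dualnorm mu Theta Om grad (PiD Om e_next) ^+ 2 + dt * L * mass e_next e_next
  <= dt * L * mass e_prev e_prev.
Proof.
have [w w_riesz] := bilin_riesz stiff_sym stiff_linr stiff_definite
  (mass_linr e_next).
have err_w := linearised_error_eq w.
rewrite !(stiff_sym _ w) !w_riesz in err_w.
have dual_le := dualnorm_sqr_le w_riesz; rewrite w_riesz in dual_le.
have defect_le := mass_defect_le e_next u u_prev zeta_mono Lz_ge0 zeta_lip LzL.
have := ler_wpM2l (ltW dt_gt0) defect_le.
rewrite -/e_prev -/zeta_defect; lra.
Qed.

End LinearisedIteration.

End GradientDiscretisation.

Lemma nneseries_le_of_descent (R : realType) (D x : nat -> R) :
  (forall i, 0 <= D i) -> (forall i, 0 <= x i) ->
  (forall i, (1 <= i)%N -> D i + x i <= x i.-1) ->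
  (\sum_(1 <= i <oo) (D i)%:E <= (x 0%N)%:E)%E.
Proof.
move=> D_ge0 x_ge0 descent.
have partial n : \sum_(1 <= i < n.+1) D i + x n <= x 0%N.
  elim: n => [|n IH]; first by rewrite big_geq // add0r.
  by rewrite big_nat_recr //=; have := descent n.+1 isT; lra.
apply: lime_le; first by apply: is_cvg_nneseries => n _ _; rewrite lee_fin.
apply: nearW => -[|n]; rewrite sumEFin lee_fin; first by rewrite big_geq.
by have := partial n; have := x_ge0 n; lra.
Qed.

Theorem mainTheorem2
  (R : realType) (dsp : measure_display) (T : measurableType dsp)
  (mu : {measure set T -> \bar R}) (Theta : set T) (d : nat)
  (B : finType) (Om : B -> set T) (grad : (B -> R) -> T -> 'rV[R]_d)
  (zeta : R -> R) (Lzeta L dt : R) (r : T -> R)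
  (un : B -> R) (U : nat -> B -> R) :
  measurable Theta -> (mu Theta < +oo)%E ->
  (forall j, measurable (Om j)) -> (forall j, Om j `<=` Theta) ->
  (forall j k, j != k -> Om j `&` Om k = set0) ->
  (forall v, isL2v mu Theta (grad v)) ->
  (forall (a : R) (v w : B -> R),
      grad (fun j => a * v j + w j) = (fun x => a *: grad v x + grad w x)) ->
  (forall v, L2vnorm mu Theta (grad v) = 0 -> v = (fun _ => 0)) ->
  {homo zeta : a b / a <= b} -> zeta 0 = 0 -> 0 <= Lzeta ->
  (forall a b, `|zeta a - zeta b| <= Lzeta * `|a - b|) ->
  0 < dt -> isL2 mu Theta r -> Lzeta / 2 <= L ->
  (forall phi : B -> R,
      L2inner mu Theta (PiD Om un) (PiD Om phi)
      + dt * L2vinner mu Theta (grad (compv zeta un)) (grad phi)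
      = L2inner mu Theta r (PiD Om phi)) ->
  (forall (i : nat) (phi : B -> R), (1 <= i)%N ->
      L2inner mu Theta (PiD Om (U i)) (PiD Om phi)
      + dt * L * L2vinner mu Theta (grad (U i)) (grad phi)
      = dt * L2vinner mu Theta
               (fun x => L *: grad (U i.-1) x - grad (compv zeta (U i.-1)) x)
               (grad phi)
        + L2inner mu Theta r (PiD Om phi)) ->
  let e := fun i : nat => (fun j => un j - U i j) in
  (forall i : nat, (1 <= i)%N ->
      2 * (dualnorm mu Theta Om grad (PiD Om (e i))) ^+ 2
      + dt * L * (L2norm mu Theta (PiD Om (e i))) ^+ 2
      <= dt * L * (L2norm mu Theta (PiD Om (e i.-1))) ^+ 2)
  /\
  (2%:E * \sum_(1 <= i <oo)
       ((dualnorm mu Theta Om grad (PiD Om (e i))) ^+ 2)%:E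
   <= (dt * L * (L2norm mu Theta (PiD Om (e 0%N))) ^+ 2)%:E)%E.
Proof.
move=> mTheta finTheta mOm _ Om_disj grad_L2 grad_lin grad_definite zeta_mono _
  Lz_ge0 zeta_lip dt_gt0 _ LzL u_sol step e.
have mass_sqr v : L2norm mu Theta (PiD Om v) ^+ 2 = mass mu Theta Om v v.
  by rewrite sqr_sqrtr // mass_ge0.
have contraction i : (1 <= i)%N ->
    2 * dualnorm mu Theta Om grad (PiD Om (e i)) ^+ 2
    + dt * L * mass mu Theta Om (e i) (e i)
    <= dt * L * mass mu Theta Om (e i.-1) (e i.-1).
  move=> i_ge1; apply: (linearised_error_contraction mTheta finTheta mOm Om_disj
    grad_L2 grad_lin grad_definite zeta_mono Lz_ge0 zeta_lip dt_gt0 LzL u_sol).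
  by move=> phi; apply: step.
split => [i i_ge1|]; first by rewrite !mass_sqr; exact: contraction.
rewrite -nneseriesZl => [|i _]; last by rewrite lee_fin sqr_ge0.
under eq_eseriesr do rewrite -EFinM.
rewrite mass_sqr.
apply: (nneseries_le_of_descent (x := fun i => dt * L * mass mu Theta Om (e i) (e i))).
- by move=> i; rewrite mulr_ge0 ?sqr_ge0.
- by move=> i; rewrite !mulr_ge0 ?mass_ge0 //; lra.
- exact: contraction.
Qed.
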